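(* Let $m\geq 2$ and $n\geq 3$ be integers and let $M$ be the adjacency matrix of the oriented Dutch windmill graph $D^m_n$, and let $I$ denote the identity matrix of order $m(n-1)+1$. Then: (1) $M^{2n-1}=mM^{n-1}$; (2) $M^{n-1}\neq 0$; (3) $M^{2n-2}\neq mM^{n-2}$; (4) $M^n\neq mI$; (5) $M^{n^2-1}=m^{n-1}M^{n-1}$.
   Context: For integers $m\geq 1$, $n\geq 3$, the oriented Dutch windmill graph $D^m_n$ is the directed graph with vertex set $V=\{1,2,\ldots,m(n-1)+1\}$ whose directed edges $(a,b)$ are exactly: $(1,(k-1)(n-1)+2)$ for $k\in\{1,\ldots,m\}$; $((k-1)(n-1)+i,(k-1)(n-1)+i+1)$ for $k\in\{1,\ldots,m\}$ and $i\in\{2,\ldots,n-1\}$; and $((k-1)(n-1)+n,1)$ for $k\in\{1,\ldots,m\}$. Its adjacency matrix $M=(a_{ij})$ is the real square matrix with $a_{ij}=1$ if $(i,j)$ is an edge and $a_{ij}=0$ otherwise. *)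

From mathcomp Require Import all_boot all_order all_algebra.
From mathcomp Require Import reals.
Set Implicit Arguments. Unset Strict Implicit. Unset Printing Implicit Defensive.
Import Order.TTheory GRing.Theory Num.Theory.

(* Directed edge relation of the oriented Dutch windmill D^m_n on vertices
   1 .. m(n-1)+1 (1-based, as in the paper).  The paper's k in {1..m} is
   represented by k' = k-1 : 'I_m. *)
Definition dw_edge (m n a b : nat) : bool :=
  [exists k : 'I_m,
     [|| (a == 1) && (b == k * (n - 1) + 2),
         [exists i : 'I_n, (2 <= i <= n - 1) && (a == k * (n - 1) + i) && (b == a + 1)]
       | (a == k * (n - 1) + n) && (b == 1)]].

Definition dw_size (m n : nat) : nat := (m * (n - 1)).+1.

(* Adjacency matrix; row/column index i : 'I_N stands for vertex i+1. *)
Definition dw_adj (R : realType) (m n : nat) : 'M[R]_(dw_size m n) :=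
  \matrix_(i, j) ((dw_edge m n i.+1 j.+1)%:R)%R.

From mathcomp Require Import all_boot all_order all_algebra.
From mathcomp Require Import reals zify.
Import Order.TTheory GRing.Theory Num.Theory.
Local Open Scope ring_scope.

(* Write n = p + 1 and follow unit row vectors through the windmill.  From
   the hub, M^s lands on the sum of the s-th vertices of the m petals for
   1 <= s <= p, and one more step brings all m walks back, so
   e_hub M^(p+1) = m e_hub.  Every other vertex reaches the hub in at most p
   steps, hence every row satisfies e M^(q(p+1) + t) = m^q e M^t for t >= p,
   which gives (1) and (5).  The inequalities (2)-(4) are read off row 1. *)

Lemma mulmx_exp_eigen {R : comPzRingType} {n} {A : 'M[R]_n} {v : 'rV[R]_n} {a c} q t :
  v *m A ^+ c = a *: v -> v *m A ^+ (q * c + t) = a ^+ q *: (v *m A ^+ t).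
Proof.
move=> vA; elim: q => [|q IHq]; first by rewrite mul0n add0n expr0 scale1r.
by rewrite mulSn -addnA exprD -mulmxE mulmxA vA -scalemxAl IHq scalerA -exprS.
Qed.

Lemma petal_index_inj (k k' p j j' : nat) : (1 <= j <= p)%N -> (1 <= j' <= p)%N ->
  (k * p + j = k' * p + j')%N -> k = k' /\ j = j'.
Proof.
move=> hj hj'.
have [lt_kk'|lt_k'k|->] := ltngtP k k'; last by lia.
- have : (k.+1 * p <= k' * p)%N by rewrite leq_mul2r lt_kk' orbT.
  rewrite mulSn; lia.
- have : (k'.+1 * p <= k * p)%N by rewrite leq_mul2r lt_k'k orbT.
  rewrite mulSn; lia.
Qed.

Section Windmill.
Variables (R : realType) (m p : nat).
Hypothesis p_gt0 : (0 < p)%N.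

Local Notation M := (dw_adj R m p.+1).

(* Row index 0 is the hub, and k * p + j (k < m, 1 <= j <= p) is the j-th
   vertex after the hub on petal k. *)
Definition vertex_row (x : nat) : 'rV[R]_(dw_size m p.+1) := delta_mx 0 (inord x).

Lemma dw_edgeE a b : dw_edge m p.+1 a.+1 b.+1 = [exists k : 'I_m,
  [|| (a == 0) && (b == k * p + 1),
      (k * p + 1 <= a < k * p + p) && (b == a + 1)
    | (a == k * p + p) && (b == 0)]]%N.
Proof.
apply: eq_existsb => k; rewrite subn1 /=.
congr [|| _, _ | _]; first by apply/idP/idP; lia.
  apply/existsP/idP => [[i /andP[/andP[]]]|hab]; first by lia.
  have lt_i : (a.+1 - k * p < p.+1)%N by lia.
  by exists (Ordinal lt_i) => /=; lia.
by apply/idP/idP; lia.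
Qed.

Lemma petal_vertex_le k j : (k < m)%N -> (j <= p)%N -> (k * p + j <= m * p)%N.
Proof.
move=> lt_km le_jp; have : (k.+1 * p <= m * p)%N by rewrite leq_mul2r lt_km orbT.
rewrite mulSn; lia.
Qed.

Lemma vertex_rowE x b : (x <= m * p)%N -> vertex_row x 0 b = (b == x :> nat)%:R.
Proof. by move=> le_x; rewrite mxE /= -val_eqE /= inordK 1?eq_sym //; lia. Qed.

Lemma vertex_row_inord x y : (x <= m * p)%N -> (y <= m * p)%N ->
  vertex_row x 0 (inord y) = (y == x)%:R.
Proof. by move=> le_x le_y; rewrite vertex_rowE // inordK //; lia. Qed.

Lemma vertex_row_neq0 x : vertex_row x != 0.
Proof.
by apply/negP => /eqP/rowP/(_ (inord x)); rewrite !mxE !eqxx => /eqP; rewrite oner_eq0.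
Qed.

Lemma vertex_row_mulE a b : (a <= m * p)%N ->
  (vertex_row a *m M) 0 b = (dw_edge m p.+1 a.+1 b.+1)%:R.
Proof. by move=> le_a; rewrite -rowE !mxE inordK //; lia. Qed.

Definition petal_layer s := \sum_(k < m) vertex_row (k * p + s).

Lemma petal_layerE s b : (1 <= s <= p)%N ->
  petal_layer s 0 b = [exists k : 'I_m, (b : nat) == k * p + s]%N%:R.
Proof.
move=> hs; rewrite summxE.
rewrite (eq_bigr (fun k : 'I_m => ((b : nat) == k * p + s)%N%:R)) => [|k _]; last first.
  by rewrite vertex_rowE // petal_vertex_le //; lia.
case: existsP => [[k0 /eqP b_k0]|no_k]; last first.
  by rewrite big1 // => k _; case: eqP => // b_k; case: no_k; exists k; apply/eqP.
rewrite (bigD1 k0) //= b_k0 eqxx big1 ?addr0 // => k ne_kk0.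
case: eqP => // /petal_index_inj[] // /val_inj eq_kk0.
by rewrite eq_kk0 eqxx in ne_kk0.
Qed.

Lemma hub_step : vertex_row 0 *m M = petal_layer 1.
Proof.
apply/rowP => b; rewrite vertex_row_mulE // dw_edgeE petal_layerE //.
by congr (nat_of_bool _)%:R; apply: eq_existsb => k; apply/idP/idP; lia.
Qed.

Lemma petal_step k j : (k < m)%N -> (1 <= j < p)%N ->
  vertex_row (k * p + j) *m M = vertex_row (k * p + j + 1).
Proof.
move=> lt_km hj.
have le_x : (k * p + j + 1 <= m * p)%N by rewrite -addnA petal_vertex_le //; lia.
apply/rowP => b; rewrite vertex_row_mulE ?vertex_rowE //; last by lia.
congr (nat_of_bool _)%:R; rewrite dw_edgeE; apply/existsP/idP => [[k' ]|hb].
  case/or3P; try lia.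
  by case/andP=> /eqP /petal_index_inj[]; lia.
by exists (Ordinal lt_km); apply/or3P/Or32 => /=; lia.
Qed.

Lemma petal_last_step k : (k < m)%N -> vertex_row (k * p + p) *m M = vertex_row 0.
Proof.
move=> lt_km; apply/rowP => b.
rewrite vertex_row_mulE ?petal_vertex_le // vertex_rowE //.
congr (nat_of_bool _)%:R; rewrite dw_edgeE; apply/existsP/idP => [[k' ]|hb].
  case/or3P; try lia.
  case/andP=> /andP[lo hi] _.
  by have [] := petal_index_inj k k' p p (k * p + p - k' * p); lia.
by exists (Ordinal lt_km); apply/or3P/Or33 => /=; lia.
Qed.

Lemma petal_walk k j t : (k < m)%N -> (1 <= j)%N -> (j + t <= p)%N ->
  vertex_row (k * p + j) *m M ^+ t = vertex_row (k * p + j + t).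
Proof.
move=> lt_km hj; elim: t => [|t IHt] ht; first by rewrite expr0 mulmx1 addn0.
rewrite exprSr -mulmxE mulmxA IHt; last by lia.
by rewrite -addnA petal_step //; [congr vertex_row | ]; lia.
Qed.

Lemma petal_return k j : (k < m)%N -> (1 <= j <= p)%N ->
  vertex_row (k * p + j) *m M ^+ (p - j).+1 = vertex_row 0.
Proof.
move=> lt_km hj; rewrite exprSr -mulmxE mulmxA petal_walk //; [|lia..].
by rewrite -addnA subnKC ?petal_last_step //; lia.
Qed.

Lemma hub_walk s : (1 <= s <= p)%N -> vertex_row 0 *m M ^+ s = petal_layer s.
Proof.
elim: s => [//|[|s] IHs] hs; first by rewrite expr1 hub_step.
rewrite exprSr -mulmxE mulmxA IHs; last by lia.
rewrite /petal_layer mulmx_suml; apply: eq_bigr => k _.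
by rewrite petal_step // addn1 !addnS.
Qed.

Lemma hub_cycle : vertex_row 0 *m M ^+ p.+1 = m%:R *: vertex_row 0.
Proof.
rewrite exprSr -mulmxE mulmxA hub_walk ?p_gt0 ?leqnn // /petal_layer mulmx_suml.
rewrite (eq_bigr (fun=> vertex_row 0)) => [|k _]; last exact: petal_last_step.
by rewrite sumr_const card_ord scaler_nat.
Qed.

Lemma vertex_rowP (A B : 'M[R]_(dw_size m p.+1)) :
  (forall x, (x <= m * p)%N -> vertex_row x *m A = vertex_row x *m B) -> A = B.
Proof.
move=> eqAB; apply/row_matrixP => i; rewrite !rowE.
have := eqAB i; rewrite /vertex_row inord_val; apply.
by have := ltn_ord i; rewrite /dw_size; lia.
Qed.

Lemma vertex_cases x : (x <= m * p)%N -> x = 0%N \/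
  exists k j, [/\ (k < m)%N, (1 <= j <= p)%N & x = k * p + j]%N.
Proof.
case: x => [|x] le_x; [by left | right].
exists (x %/ p)%N, (x %% p).+1; split; first by rewrite ltn_divLR; lia.
  by have := ltn_pmod x p_gt0; lia.
by rewrite addnS -divn_eq.
Qed.

Lemma dw_adj_exp_periodic q t : (p <= t)%N -> M ^+ (q * p.+1 + t) = (m ^ q)%:R *: M ^+ t.
Proof.
move=> le_pt; apply: vertex_rowP => x /vertex_cases[->|[k [j [lt_km hj ->]]]].
  by rewrite -scalemxAr natrX (mulmx_exp_eigen _ _ hub_cycle).
have -> : t = ((p - j).+1 + (t - (p - j).+1))%N by lia.
rewrite addnCA -scalemxAr !(exprD _ (p - j).+1) -!mulmxE !mulmxA petal_return //.
by rewrite natrX (mulmx_exp_eigen _ _ hub_cycle).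
Qed.

Hypothesis m_gt0 : (0 < m)%N.

Lemma vertex_row1_return : vertex_row 1 *m M ^+ p = vertex_row 0.
Proof. by have := petal_return 0 1 m_gt0; rewrite mul0n add0n subn1 prednK //; apply; lia. Qed.

Lemma vertex_row1_walk s : (1 <= s <= p)%N -> vertex_row 1 *m M ^+ (p + s) = petal_layer s.
Proof. by move=> hs; rewrite exprD -mulmxE mulmxA vertex_row1_return hub_walk. Qed.

Lemma dw_adj_exp_neq0 : M ^+ p != 0.
Proof.
apply/negP => /eqP/(congr1 (mulmx (vertex_row 1))).
by rewrite vertex_row1_return mulmx0 => /eqP; apply/negP/vertex_row_neq0.
Qed.

Hypothesis m_gt1 : (1 < m)%N.

Lemma petal_layer_neq s : (1 <= s <= p)%N -> petal_layer s != m%:R *: vertex_row s.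
Proof.
move=> hs; have le_ps : (1 * p + s <= m * p)%N by apply: petal_vertex_le; lia.
apply/negP => /eqP/rowP/(_ (inord (1 * p + s))).
rewrite petal_layerE // inordK; last by lia.
rewrite mxE vertex_row_inord //; last by lia.
have -> : [exists k : 'I_m, 1 * p + s == k * p + s]%N by apply/existsP; exists (Ordinal m_gt1).
have /negPf -> : (1 * p + s != s)%N by lia.
by rewrite mulr0 => /eqP; rewrite oner_eq0.
Qed.

Lemma dw_adj_exp_double_neq : M ^+ (p + p) != m%:R *: M ^+ (p - 1).
Proof.
apply/negP => /eqP/(congr1 (mulmx (vertex_row 1))).
have -> : vertex_row 1 = vertex_row (0 * p + 1) by rewrite mul0n.
rewrite -scalemxAr (petal_walk 0 1 (p - 1)) //; last by lia.
rewrite mul0n !add0n vertex_row1_walk ?p_gt0 ?leqnn // subnKC //.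
by move/eqP; apply/negP/petal_layer_neq; rewrite p_gt0 leqnn.
Qed.

Lemma dw_adj_exp_neq_scalar : M ^+ p.+1 != m%:R *: 1%:M.
Proof.
apply/negP => /eqP/(congr1 (mulmx (vertex_row 1))).
have -> : M ^+ p.+1 = M ^+ (p + 1) by rewrite addn1.
rewrite -scalemxAr mulmx1 vertex_row1_walk ?p_gt0 //.
by move/eqP; apply/negP/petal_layer_neq; rewrite p_gt0.
Qed.

End Windmill.

Theorem theorem3p1 (R : realType) (m n : nat) (hm : (2 <= m)%N) (hn : (3 <= n)%N) :
  let M := dw_adj R m n in
  [/\ M ^+ (2 * n - 1) = m%:R *: M ^+ (n - 1),
      M ^+ (n - 1) != 0,
      M ^+ (2 * n - 2) != m%:R *: M ^+ (n - 2),
      M ^+ n != m%:R *: 1%:M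
    & M ^+ (n ^ 2 - 1) = (m ^ (n - 1))%:R *: M ^+ (n - 1)].
Proof.
case: n hn => [//|p] hn /=.
have p_gt0 : (0 < p)%N by lia.
have -> : (p.+1 - 1 = p)%N by lia.
have -> : (2 * p.+1 - 1 = 1 * p.+1 + p)%N by lia.
have -> : (2 * p.+1 - 2 = p + p)%N by lia.
have -> : (p.+1 - 2 = p - 1)%N by lia.
have -> : (p.+1 ^ 2 - 1 = p * p.+1 + p)%N by rewrite expnS expn1; lia.
split.
- by rewrite dw_adj_exp_periodic // expn1.
- by apply: dw_adj_exp_neq0; lia.
- by apply: dw_adj_exp_double_neq; lia.
- by apply: dw_adj_exp_neq_scalar; lia.
- exact: dw_adj_exp_periodic.
Qed.
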